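(* DBS is complete and optimal: on every MAPF-DL instance, and for every choice of tie-breaking and of the groups selected for merging or splitting, DBS terminates and returns a solution whose number of unsuccessful agents is the minimum over all solutions of the instance.
   Context: MAPF-DL. An instance consists of a deadline $T_{\mathrm{end}}\in\mathbb{N}$, a finite undirected graph $G=(V,E)$, and $M$ agents $a_1,\dots,a_M$; agent $a_i$ has a start vertex $s_i$ and a goal vertex $g_i$, and the graph distance from $s_i$ to $g_i$ is at most $T_{\mathrm{end}}$. A path for $a_i$ is a map $l_i:\{0,\dots,T_{\mathrm{end}}\}\to V$ with $l_i(0)=s_i$, $l_i(T_{\mathrm{end}})=g_i$, and for each $t\ge1$ either $(l_i(t-1),l_i(t))\in E$ or $l_i(t-1)=l_i(t)$. A plan assigns a path to each agent of some subset (the successful agents); the others are unsuccessful and get no path. Two distinct successful agents collide if they occupy the same vertex at the same time step, or traverse the same edge in opposite directions between time steps $t$ and $t+1$. A solution is a plan with no collisions; its cost is the number of unsuccessful agents. A set (group) $\gamma$ of agents is consistent if there is a solution in which every agent of $\gamma$ is successful and all other agents are unsuccessful (the empty group is consistent). DBS assumes an exact oracle deciding consistency and, for consistent $\gamma$, producing such a solution. Algorithm DBS (Death-Based Search). Best-first search over a death tree (DT); each DT node $N$ has a collection $N.\mathrm{live}$ of pairwise disjoint groups of agents and a cost $N.\mathrm{cost}$ (number of agents declared unsuccessful). The root has $\mathrm{live}=\{\{a_1\},\dots,\{a_M\}\}$ and cost $0$; OPEN initially contains the root. Repeat: remove from OPEN a node $N$ of minimum cost (ties arbitrary). If all groups of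 $N.\mathrm{live}$ are consistent: if $N.\mathrm{live}$ consists of a single group $\gamma$, return a solution in which exactly the agents of $\gamma$ are successful; otherwise create one child $N'$ with $N'.\mathrm{live}=(N.\mathrm{live}\setminus\{\gamma_1,\gamma_2\})\cup\{\gamma_1\cup\gamma_2\}$, where $\gamma_1\neq\gamma_2$ are two groups of smallest size in $N.\mathrm{live}$ (ties arbitrary), and $N'.\mathrm{cost}=N.\mathrm{cost}$, and insert it into OPEN. Otherwise, let $\gamma$ be an inconsistent group of $N.\mathrm{live}$; for each agent $a_i\in\gamma$ create a child $N'$ with $N'.\mathrm{live}=(N.\mathrm{live}\setminus\{\gamma\})\cup\{\gamma\setminus\{a_i\}\}$ and $N'.\mathrm{cost}=N.\mathrm{cost}+1$, and insert it into OPEN. *)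

From Stdlib Require Import Relations.
From mathcomp Require Import all_boot.
Set Implicit Arguments. Unset Strict Implicit. Unset Printing Implicit Defensive.

Definition dist_le (V : finType) (E : rel V) (u v : V) (k : nat) : Prop :=
  exists p : seq V, [/\ size p <= k, path E u p & last u p = v].

Section MAPFDL.
Variables (Tend : nat) (V : finType) (E : rel V) (M : nat)
          (s g : 'I_M -> V).

Definition agent := 'I_M.

(* a path l : {0..Tend} -> V (values beyond Tend are irrelevant) *)
Definition valid_path (i : agent) (l : nat -> V) : Prop :=
  [/\ l 0 = s i, l Tend = g i &
      forall t, 0 < t <= Tend -> E (l t.-1) (l t) \/ l t.-1 = l t].

(* a plan: successful agents get Some path, unsuccessful ones None *)
Definition plan := agent -> option (nat -> V).

Definition collide (l1 l2 : nat -> V) : Prop :=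
  (exists t, t <= Tend /\ l1 t = l2 t) \/
  (exists t, t < Tend /\ l1 t = l2 t.+1 /\ l1 t.+1 = l2 t).

Definition is_plan (p : plan) : Prop :=
  forall i l, p i = Some l -> valid_path i l.

Definition is_solution (p : plan) : Prop :=
  is_plan p /\
  forall i j l1 l2, i <> j -> p i = Some l1 -> p j = Some l2 -> ~ collide l1 l2.

Definition cost (p : plan) : nat := #|[pred i : agent | ~~ isSome (p i)]|.

Definition optimal_solution (p : plan) : Prop :=
  is_solution p /\ forall q, is_solution q -> cost p <= cost q.

Definition succ_exactly (p : plan) (gam : {set agent}) : Prop :=
  forall i, isSome (p i) = (i \in gam).

Definition consistent (gam : {set agent}) : Prop :=
  exists p, is_solution p /\ succ_exactly p gam.

(* DT node: (live groups, cost) *)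
Definition node := ({set {set agent}} * nat)%type.

Inductive dbs_state :=
| Open of seq node      (* OPEN list, viewed as a multiset *)
| Done of plan.

Definition min_in (N : node) (OPEN : seq node) : Prop :=
  forall N', N' \in OPEN -> N.2 <= N'.2.

Definition all_consistent (live : {set {set agent}}) : Prop :=
  forall gam, gam \in live -> consistent gam.

Inductive dbs_step : dbs_state -> dbs_state -> Prop :=
| dbs_return OPEN rest (N : node) gam p :
    perm_eq OPEN (N :: rest) -> min_in N OPEN ->
    all_consistent N.1 -> N.1 = [set gam] ->
    is_solution p -> succ_exactly p gam ->
    dbs_step (Open OPEN) (Done p)
| dbs_merge OPEN rest (N : node) g1 g2 :
    perm_eq OPEN (N :: rest) -> min_in N OPEN ->
    all_consistent N.1 ->
    g1 \in N.1 -> g2 \in N.1 -> g1 != g2 ->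
    (forall gam, gam \in N.1 -> #|g1| <= #|gam|) ->
    (forall gam, gam \in N.1 -> gam != g1 -> #|g2| <= #|gam|) ->
    dbs_step (Open OPEN)
      (Open ((((N.1 :\ g1) :\ g2) :|: [set g1 :|: g2], N.2) :: rest))
| dbs_split OPEN rest (N : node) gam :
    perm_eq OPEN (N :: rest) -> min_in N OPEN ->
    gam \in N.1 -> ~ consistent gam ->
    dbs_step (Open OPEN)
      (Open ([seq ((N.1 :\ gam) :|: [set gam :\ a], N.2.+1) | a <- enum gam]
             ++ rest)).

Definition dbs_init : dbs_state :=
  Open [:: ([set [set i] | i : agent], 0)].

End MAPFDL.

From Stdlib Require Import Relations Classical.
From mathcomp Require Import all_boot.
Set Implicit Arguments. Unset Strict Implicit. Unset Printing Implicit Defensive.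

(* Every open node N of the death tree has pairwise disjoint groups and
   N.2 + |cover N.1| = M, i.e. its cost counts exactly the agents outside its
   groups; and every solution q has an open node whose groups cover the
   successful agents of q.  Splitting an inconsistent group A preserves the
   latter, because some agent of A is unsuccessful in q (otherwise q restricted
   to A would show A consistent).  So when a node of minimum cost with a single
   consistent group A is expanded, the returned solution costs
   M - |A| = N.2 <= N'.2 <= cost q for the node N' covering any solution q.
   A node weighs (M+2)^(|cover N.1| + |N.1|): a merge lowers the exponent, a
   split replaces the node by at most M children of smaller exponent, so the
   total weight of OPEN decreases and DBS terminates.  It never gets stuck
   before returning, since the empty plan is a solution and hence OPEN is never
   empty. *)

Section Groups.
Variable T : finType.
Implicit Types (P : {set {set T}}) (A B : {set T}) (a : T).

Definition split_group P A a := P :\ A :|: [set A :\ a].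
Definition merge_groups P A B := P :\ A :\ B :|: [set A :|: B].

Lemma cover_setU P Q : cover (P :|: Q) = cover P :|: cover Q.
Proof. exact: bigcup_setU. Qed.

Lemma cover_split_group P A a : trivIset P -> A \in P -> a \in A ->
  cover (split_group P A a) = cover P :\ a.
Proof.
move=> tiP PA Aa; have sAP : A \subset cover P := bigcup_sup A PA.
rewrite cover_setU cover1 coverD1 //; apply/setP => x; rewrite !inE.
have [->|_] := eqVneq x a; first by rewrite Aa.
by have [/(subsetP sAP)->|] := boolP (x \in A); rewrite ?orbT ?andbT ?orbF.
Qed.

Lemma trivIset_split_group P A a : trivIset P -> A \in P ->
  trivIset (split_group P A a).
Proof.
move=> tiP PA; apply: trivIsetU; [exact: trivIsetD | exact: trivIset1 |].
rewrite coverD1 // cover1 -setI_eq0; apply/eqP/setP => x.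
by rewrite !inE; case: (x \in A); rewrite ?andbF.
Qed.

Lemma card_split_group P A a : A \in P -> #|split_group P A a| <= #|P|.
Proof.
by move=> PA; rewrite /split_group setUC cardsU1 (cardsD1 A P) PA; case: (_ \notin _).
Qed.

Lemma cover_merge_groups P A B : trivIset P -> A \in P -> B \in P -> A != B ->
  cover (merge_groups P A B) = cover P.
Proof.
move=> tiP PA PB AB; have sAP : A \subset cover P := bigcup_sup A PA.
have sBP : B \subset cover P := bigcup_sup B PB.
rewrite cover_setU cover1 coverD1 ?trivIsetD ?coverD1 // ?inE 1?eq_sym ?AB //.
apply/setP => x; rewrite !inE.
have [xA|_] := boolP (x \in A); first by rewrite (subsetP sAP) ?orbT.
have [xB|_] := boolP (x \in B); first by rewrite (subsetP sBP) ?orbT.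
by rewrite /= !orbF.
Qed.

Lemma trivIset_merge_groups P A B : trivIset P -> A \in P -> B \in P -> A != B ->
  trivIset (merge_groups P A B).
Proof.
move=> tiP PA PB AB.
apply: trivIsetU; [by rewrite !trivIsetD | exact: trivIset1 |].
rewrite coverD1 ?trivIsetD ?coverD1 // ?inE 1?eq_sym ?AB // cover1.
rewrite -setI_eq0; apply/eqP/setP => x.
by rewrite !inE; case: (x \in A); case: (x \in B); rewrite ?andbF.
Qed.

Lemma card_merge_groups P A B : A \in P -> B \in P -> A != B ->
  #|merge_groups P A B| < #|P|.
Proof.
move=> PA PB AB; have PAB : B \in P :\ A by rewrite !inE eq_sym AB.
rewrite /merge_groups setUC cardsU1 (cardsD1 A P) PA (cardsD1 B (P :\ A)) PAB.
by case: (_ \notin _).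
Qed.

End Groups.

Lemma seq_argmin (T : eqType) (f : T -> nat) (r : seq T) : r != [::] ->
  exists2 x, x \in r & forall y, y \in r -> f x <= f y.
Proof.
elim: r => // a [|b r] IH _.
  by exists a => [|y]; rewrite ?mem_seq1 // => /eqP->.
have [x xr xmin] := IH isT.
have [fax|fxa] := leqP (f a) (f x).
- exists a => [|y]; first exact: mem_head.
  by rewrite inE => /predU1P[->//|/xmin]; apply: leq_trans.
- exists x => [|y]; first by rewrite inE xr orbT.
  by rewrite inE => /predU1P[->|/xmin//]; apply: ltnW.
Qed.

Lemma set_argmin (T : finType) (f : T -> nat) (S : {set T}) : S != set0 ->
  exists2 x, x \in S & forall y, y \in S -> f x <= f y.
Proof.
rewrite -cards_eq0 cardE size_eq0 => /(seq_argmin f)[x + xmin].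
by rewrite mem_enum; exists x => // y Sy; apply: xmin; rewrite mem_enum.
Qed.

Section DBS.
Variables (Tend : nat) (V : finType) (E : rel V) (M : nat) (s g : 'I_M -> V).
Local Notation solution := (is_solution Tend E s g).
Local Notation consistent := (consistent Tend E s g).
Local Notation step := (dbs_step Tend E s g).

Definition successful (q : plan V M) : {set agent M} := [set i | isSome (q i)].

Lemma cost_add_card (p : plan V M) (A : {set agent M}) :
  succ_exactly p A -> cost p + #|A| = M.
Proof.
move=> pA; have -> : cost p = #|[predC A]|.
  by apply: eq_card => i; rewrite !inE pA.
by rewrite addnC cardC card_ord.
Qed.

Lemma consistent_sub_successful q (A : {set agent M}) :
  solution q -> A \subset successful q -> consistent A.
Proof.
move=> [qplan qfree] sAq.
exists (fun i => if i \in A then q i else None); split; first split.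
- by move=> i l; case: ifP => // _; apply: qplan.
- move=> i j l1 l2 ij; case: ifP => // _ qi; case: ifP => // _ qj.
  exact: qfree ij qi qj.
- move=> i; case: ifP => // Ai.
  by have := subsetP sAq i Ai; rewrite inE.
Qed.

Lemma empty_plan_solution : solution (fun _ => None).
Proof. by split. Qed.

Definition wf_node (N : node M) :=
  [/\ trivIset N.1, N.2 + #|cover N.1| = M & N.1 != set0].

Definition covers (N : node M) q := successful q \subset cover N.1.

Definition dbs_inv (st : dbs_state V M) : Prop :=
  match st with
  | Open OPEN => {in OPEN, forall N, wf_node N} /\
      forall q, solution q -> exists2 N, N \in OPEN & covers N q
  | Done p => optimal_solution Tend E s g p
  end.

Lemma dbs_inv_init : 0 < M -> dbs_inv (dbs_init V M).
Proof.
move=> M_gt0; have coverT : cover [set [set i] | i : 'I_M] = setT.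
  rewrite cover_imset; apply/setP => x.
  by rewrite inE; apply/bigcupP; exists x; rewrite ?inE.
split=> [N | q _]; last first.
  by exists ([set [set i] | i : 'I_M], 0); rewrite ?mem_head /covers ?coverT ?subsetT.
rewrite inE => /eqP->; split=> /=.
- apply/trivIsetP => _ _ /imsetP[i _ ->] /imsetP[j _ ->] ij.
  by rewrite disjoints1 inE; apply: contra ij => /eqP->.
- by rewrite coverT cardsT card_ord.
- by apply/set0Pn; exists [set Ordinal M_gt0]; apply: imset_f.
Qed.

Lemma dbs_inv_return OPEN rest N A p :
  dbs_inv (Open V OPEN) -> perm_eq OPEN (N :: rest) -> min_in N OPEN ->
  N.1 = [set A] -> solution p -> succ_exactly p A -> optimal_solution Tend E s g p.
Proof.
move=> [wf covered] OPEN_N Nmin NA psol pA; split=> // q qsol.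
have [N' N'in qN'] := covered q qsol.
have [_ costN _] := wf N ltac:(by rewrite (perm_mem OPEN_N) mem_head).
have [_ costN' _] := wf N' N'in.
rewrite NA cover1 in costN.
have -> : cost p = N.2 by apply/eqP; rewrite -(eqn_add2r #|A|) costN cost_add_card.
rewrite -(leq_add2r #|successful q|) cost_add_card; last by move=> i; rewrite inE.
by rewrite -[X in _ <= X]costN' leq_add ?Nmin ?subset_leq_card.
Qed.

Lemma dbs_inv_replace OPEN rest N children :
  dbs_inv (Open V OPEN) -> perm_eq OPEN (N :: rest) ->
  {in children, forall N', wf_node N'} ->
  (forall q, solution q -> covers N q -> exists2 N', N' \in children & covers N' q) ->
  dbs_inv (Open V (children ++ rest)).
Proof.
move=> [wf covered] OPEN_N wf_children cover_children.
have restP N' : N' \in rest -> N' \in OPEN.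
  by move=> N'in; rewrite (perm_mem OPEN_N) inE N'in orbT.
split=> [N' | q qsol].
  by rewrite mem_cat => /orP[/wf_children | /restP/wf].
have [N' + qN'] := covered q qsol.
rewrite (perm_mem OPEN_N) inE => /predU1P[NN'|N'in].
  subst N'; have [N'' N''in qN''] := cover_children q qsol qN'.
  by exists N''; rewrite ?mem_cat ?N''in.
by exists N'; rewrite ?mem_cat ?N'in ?orbT.
Qed.

Lemma dbs_inv_head OPEN N rest :
  dbs_inv (Open V OPEN) -> perm_eq OPEN (N :: rest) -> wf_node N.
Proof. by case=> wf _ /perm_mem OPEN_N; apply: wf; rewrite OPEN_N mem_head. Qed.

Lemma wf_node_merge N A B : wf_node N -> A \in N.1 -> B \in N.1 -> A != B ->
  wf_node (merge_groups N.1 A B, N.2).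
Proof.
move=> [tiN costN _] NA NB AB; split=> /=.
- exact: trivIset_merge_groups.
- by rewrite cover_merge_groups.
- by apply/set0Pn; exists (A :|: B); rewrite !inE eqxx orbT.
Qed.

Lemma wf_node_split N A a : wf_node N -> A \in N.1 -> a \in A ->
  wf_node (split_group N.1 A a, N.2.+1).
Proof.
move=> [tiN costN _] NA Aa; split=> /=.
- exact: trivIset_split_group.
- have aN : a \in cover N.1 := subsetP (bigcup_sup A NA) a Aa.
  rewrite cover_split_group // -[X in _ = X]costN.
  by rewrite (cardsD1 a (cover N.1)) aN addSnnS.
- by apply/set0Pn; exists (A :\ a); rewrite !inE eqxx orbT.
Qed.

Lemma covers_split N A q : trivIset N.1 -> A \in N.1 -> ~ consistent A ->
  solution q -> covers N q ->
  exists2 a, a \in A & covers (split_group N.1 A a, N.2.+1) q.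
Proof.
move=> tiN NA Ainc qsol qN.
have /subsetPn[a Aa aq] : ~~ (A \subset successful q).
  by apply/negP => /(consistent_sub_successful qsol).
by exists a; rewrite // /covers cover_split_group // subsetD1 aq andbT.
Qed.

Lemma dbs_inv_step st st' : dbs_inv st -> step st st' -> dbs_inv st'.
Proof.
move=> inv st_st'; case: st_st' inv
  => [OPEN rest N A p OPEN_N Nmin _ NA psol pA
     | OPEN rest N A B OPEN_N _ _ NA NB AB _ _ | OPEN rest N A OPEN_N _ NA Ainc] inv.
- exact: dbs_inv_return inv OPEN_N Nmin NA psol pA.
- have wfN := dbs_inv_head inv OPEN_N; have [tiN _ _] := wfN.
  apply: (dbs_inv_replace (children := [:: (merge_groups N.1 A B, N.2)]) inv OPEN_N).
    by move=> N'; rewrite inE => /eqP->; apply: wf_node_merge.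
  move=> q _ qN; exists (merge_groups N.1 A B, N.2); first exact: mem_head.
  by rewrite /covers cover_merge_groups.
- have wfN := dbs_inv_head inv OPEN_N; have [tiN _ _] := wfN.
  apply: (dbs_inv_replace inv OPEN_N).
    by move=> _ /mapP[a + ->]; rewrite mem_enum; apply: wf_node_split.
  move=> q qsol /(covers_split tiN NA Ainc qsol)[a Aa qNa].
  by exists (split_group N.1 A a, N.2.+1); rewrite // map_f ?mem_enum.
Qed.

Definition node_size (N : node M) := #|cover N.1| + #|N.1|.
Definition node_weight (N : node M) := M.+2 ^ node_size N.
Definition dbs_measure (st : dbs_state V M) :=
  if st is Open OPEN then (\sum_(N <- OPEN) node_weight N).+1 else 0.

Lemma node_size_merge N A B : wf_node N -> A \in N.1 -> B \in N.1 -> A != B ->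
  node_size (merge_groups N.1 A B, N.2) < node_size N.
Proof.
move=> [tiN _ _] NA NB AB.
by rewrite /node_size /= cover_merge_groups // ltn_add2l card_merge_groups.
Qed.

Lemma node_size_split N A a : wf_node N -> A \in N.1 -> a \in A ->
  node_size (split_group N.1 A a, N.2.+1) < node_size N.
Proof.
move=> [tiN _ _] NA Aa; have aN : a \in cover N.1 := subsetP (bigcup_sup A NA) a Aa.
rewrite /node_size /= cover_split_group // [X in _ < X + _](cardsD1 a) aN.
by rewrite add1n addSn ltnS leq_add2l card_split_group.
Qed.

Lemma split_children_weight N A : wf_node N -> A \in N.1 ->
  \sum_(a <- enum A) node_weight (split_group N.1 A a, N.2.+1) < node_weight N.
Proof.
move=> wfN NA; have size_gt0 : 0 < node_size N.
  by rewrite /node_size (cardsD1 A N.1) NA addnS.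
rewrite big_enum /= /node_weight -(prednK size_gt0) expnS.
apply: (@leq_ltn_trans (#|A| * M.+2 ^ (node_size N).-1)).
  rewrite -sum_nat_const; apply: leq_sum => a Aa.
  by rewrite leq_pexp2l // -ltnS prednK // node_size_split.
rewrite ltn_pmul2r ?expn_gt0 // ltnS; apply: leqW.
by have := max_card A; rewrite card_ord.
Qed.

Lemma dbs_measure_step st st' :
  dbs_inv st -> step st st' -> dbs_measure st' < dbs_measure st.
Proof.
move=> inv st_st'; case: st_st' inv
  => [// | OPEN rest N A B OPEN_N _ _ NA NB AB _ _ | OPEN rest N A OPEN_N _ NA _] inv /=;
  have wfN := dbs_inv_head inv OPEN_N.
- rewrite (perm_big _ OPEN_N) !big_cons ltnS ltn_add2r.
  by rewrite ltn_exp2l // node_size_merge.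
- rewrite (perm_big _ OPEN_N) big_cons big_cat ltnS ltn_add2r big_map.
  exact: split_children_weight.
Qed.

Lemma dbs_progress OPEN : dbs_inv (Open V OPEN) -> exists st', step (Open V OPEN) st'.
Proof.
move=> inv; have [wf covered] := inv.
have [N0 N0in _] := covered _ empty_plan_solution.
have [N Nin Nmin] : exists2 N, N \in OPEN & min_in N OPEN.
  by apply: seq_argmin; apply: contraTneq N0in => ->.
have OPEN_N := perm_to_rem Nin; have [_ _ N1_0] := wf N Nin.
have [Nac | Ninc] := classic (all_consistent Tend E s g N.1); last first.
  have [A NA Ainc] : exists2 A, A \in N.1 & ~ consistent A.
    apply: NNPP => none; apply: Ninc => A NA.
    by apply: NNPP => Ainc; apply: none; exists A.
  by eexists; apply: dbs_split OPEN_N Nmin NA Ainc.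
have [/cards1P[A NA] | N1_ne1] := boolP (#|N.1| == 1).
  have [p [psol pA]] := Nac A ltac:(by rewrite NA set11).
  by eexists; apply: dbs_return OPEN_N Nmin Nac NA psol pA.
have [A NA Amin] := set_argmin (fun C : {set agent M} => #|C|) N1_0.
have N1A_0 : N.1 :\ A != set0.
  by rewrite -cards_eq0; move: N1_ne1; rewrite (cardsD1 A) NA add1n eqSS.
have [B /setD1P[BA NB] Bmin] := set_argmin (fun C : {set agent M} => #|C|) N1A_0.
have AB : A != B by rewrite eq_sym.
eexists; apply: (dbs_merge OPEN_N Nmin Nac NA NB AB Amin) => C NC CA.
by apply: Bmin; rewrite !inE CA.
Qed.

Lemma dbs_inv_acc n st :
  dbs_measure st < n -> dbs_inv st -> Acc (fun y x => step x y) st.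
Proof.
elim: n st => [// | n IH] st; rewrite ltnS => st_le inv; constructor=> st' st_st'.
apply: IH (dbs_inv_step inv st_st').
exact: leq_trans (dbs_measure_step inv st_st') st_le.
Qed.

Lemma dbs_inv_reachable st st' :
  clos_refl_trans _ step st st' -> dbs_inv st -> dbs_inv st'.
Proof.
elim=> [x y xy inv | // | x y z _ IHxy _ IHyz /IHxy/IHyz //].
exact: dbs_inv_step inv xy.
Qed.

End DBS.

(* Symmetry of E and the distance bound only make singleton groups
   consistent, which the argument never needs. *)
Theorem theorem3 (Tend : nat) (V : finType) (E : rel V) (M : nat)
    (s g : 'I_M -> V)
    (HE : symmetric E) (HM : 0 < M)
    (Hdist : forall i, dist_le E (s i) (g i) Tend) :
  Acc (fun y x => dbs_step Tend E s g x y) (dbs_init V M) /\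
  (forall st, clos_refl_trans _ (dbs_step Tend E s g) (dbs_init V M) st ->
     (exists st', dbs_step Tend E s g st st') \/
     (exists p, st = Done p /\ optimal_solution Tend E s g p)).
Proof.
have inv0 := dbs_inv_init Tend E s g HM.
split; first exact: dbs_inv_acc (ltnSn _) inv0.
move=> st /dbs_inv_reachable/(_ inv0).
by case: st => [OPEN inv | p opt]; [left; apply: dbs_progress inv | right; exists p].
Qed.
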